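(* Let $d \ge 3$ and $F \lneq F' \leq \mathrm{Sym}(\Omega)$ with $F'$ preserving each $F$-orbit in $\Omega$. Fix a vertex $v_0$ of $T_d$ and let $K(F,F')$ be the stabilizer of $v_0$ in $G(F,F')$. Then $K(F,F')$ is an ICC group, i.e. every non-trivial element of $K(F,F')$ has an infinite conjugacy class in $K(F,F')$.
   Context: $\Omega$ is a set with $|\Omega|=d$; $T_d$ is the $d$-regular tree with vertex set $V_d$ and a coloring $c$ of its edges by $\Omega$ which is bijective on the set $E(v)$ of edges at each vertex $v$; local permutations are $\sigma(g,v) = c|_{E(gv)}\circ g\circ (c|_{E(v)})^{-1}$. $G(F,F')$ is the group of automorphisms of $T_d$ whose local permutations all lie in $F'$ and all but finitely many lie in $F$. *)

From mathcomp Require Import all_boot all_order all_fingroup.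
Set Implicit Arguments. Unset Strict Implicit. Unset Printing Implicit Defensive.

(* Model of T_d with its legal edge colouring c by Omega = 'I_d.
   Vertices: reduced words over 'I_d (no two consecutive letters equal),
   i.e. elements of the free product of d copies of Z/2 (Cayley graph).
   The neighbour of w across the edge of colour a is  step w a  (multiply by a
   at the head of the word); the edge {w, step w a} has colour a. *)

Definition neqr (d : nat) : rel 'I_d := fun a b => a != b.

Definition vertex (d : nat) := {s : seq 'I_d | sorted (@neqr d) s}.

Definition step_seq (d : nat) (s : seq 'I_d) (a : 'I_d) : seq 'I_d :=
  match s with
  | b :: t => if b == a then t else a :: s
  | [::] => [:: a]
  end.

Lemma step_seq_sorted (d : nat) (s : seq 'I_d) (a : 'I_d) :
  sorted (@neqr d) s -> sorted (@neqr d) (step_seq s a).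
Proof.
case: s => [|b t] //= Hs.
case: eqP => [_|Hba]; first exact: (path_sorted Hs).
rewrite /= Hs andbT /neqr; apply/eqP => Hab; apply: Hba; by rewrite Hab.
Qed.

Definition step (d : nat) (v : vertex d) (a : 'I_d) : vertex d :=
  exist _ (step_seq (val v) a) (step_seq_sorted a (valP v)).

Definition adj (d : nat) (u w : vertex d) : Prop := exists a, w = step u a.

Definition is_aut (d : nat) (g : vertex d -> vertex d) : Prop :=
  bijective g /\ (forall u w, adj u w <-> adj (g u) (g w)).

(* "sigma(g,v) lies in H": the local permutation sigma(g,v) = c o g o c^{-1}
   sends the colour a of the edge {v, v.a} to the colour b of the edge
   {g v, g (v.a)}, i.e. g (v.a) = (g v).b; we require it to be (the function
   of) some p in H. *)
Definition local_in (d : nat) (H : {set {perm 'I_d}}) (g : vertex d -> vertex d)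
  (v : vertex d) : Prop :=
  exists2 p, p \in H & forall a, g (step v a) = step (g v) (p a).

Definition in_G (d : nat) (F F' : {set {perm 'I_d}}) (g : vertex d -> vertex d) : Prop :=
  [/\ is_aut g,
      (forall v, local_in F' g v) &
      exists l : seq (vertex d), forall v, v \notin l -> local_in F g v].

Definition in_K (d : nat) (F F' : {set {perm 'I_d}}) (v0 : vertex d)
  (g : vertex d -> vertex d) : Prop :=
  in_G F F' g /\ g v0 = v0.

Definition conj_of (d : nat) (P : (vertex d -> vertex d) -> Prop)
  (k g : vertex d -> vertex d) : Prop :=
  exists h, P h /\ forall x, g (h x) = h (k x).

(* a set of maps (considered up to extensional equality) is finite *)
Definition finite_maps (d : nat) (C : (vertex d -> vertex d) -> Prop) : Prop :=
  exists l : seq (vertex d -> vertex d),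
    forall g, C g -> exists i, (i < size l)%N /\ forall x, g x = nth id l i x.

Definition ICC (d : nat) (P : (vertex d -> vertex d) -> Prop) : Prop :=
  forall k, P k -> (exists x, k x <> x) -> ~ finite_maps (conj_of P k).

From mathcomp Require Import all_boot all_order all_fingroup.
From Stdlib Require Import Classical ClassicalEpsilon Wf_nat.
From mathcomp Require Import zify.
Set Implicit Arguments. Unset Strict Implicit. Unset Printing Implicit Defensive.

(* Let k be a nontrivial element of K.  A vertex w moved by k and closest to
   the root has a fixed parent, so k w is a sibling of w.  Because F' preserves
   the F-orbits, a nontrivial t in F' fixing a colour c can be realised as a
   "twist" below any vertex u whose edge to its parent has colour c: an element
   of K with local permutation t at u, local permutations in F below u, and
   acting trivially outside the subtree of u.  Take the twists h_n at the
   vertices u_n = (c e)^(n+1) w of a ray below w (e a third colour, using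
   d >= 3).  Then h_n moves the neighbour of u_n of colour m (where t m <> m),
   which h_N fixes for N > n, and every h_N fixes the subtree of k w; hence the
   conjugates h_n k h_n^-1 are pairwise distinct.  Translations reduce the
   base vertex v0 to the root. *)

Notation reduced := (sorted (@neqr _)).

Lemma last_rev (T : Type) (x : T) (s : seq T) : last x (rev s) = head x s.
Proof. by case: s => [|y s] //=; rewrite rev_cons last_rcons. Qed.

Lemma exists_third (T : finType) (x y : T) : 2 < #|T| -> exists2 z, z != x & z != y.
Proof.
move=> cardT; have /subsetPn [z _] : ~~ ([set: T] \subset [set x; y]).
  apply: contraTN cardT => /subset_leq_card; rewrite cardsT cards2 -leqNgt => le.
  by apply: leq_trans le _; case: (x != y).
by rewrite !inE => /norP [zx zy]; exists z.
Qed.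

Lemma pigeonhole_rel (N : nat) (P : nat -> nat -> Prop) :
  (forall n, exists i, i < N /\ P n i) ->
  exists n1 n2 i, [/\ n1 < n2, P n1 i & P n2 i].
Proof.
move=> HP; have [f Pf] : exists f : 'I_N.+1 -> 'I_N, forall n : 'I_N.+1, P n (f n).
  apply: (choice (fun (n : 'I_N.+1) (i : 'I_N) => P n i)) => n.
  by have [i [lt_i Pi]] := HP n; exists (Ordinal lt_i).
have /injectivePn [n1 [n2 neq_n eq_f]] : ~~ injectiveb f.
  by apply/injectiveP => /leq_card; rewrite !card_ord ltnn.
case: (ltngtP n1 n2) => [lt_n | gt_n | /val_inj eq_n]; last by rewrite eq_n eqxx in neq_n.
- by exists n1, n2, (f n1); split; rewrite // eq_f.
- by exists n2, n1, (f n1); split; rewrite // eq_f.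
Qed.

Section ReducedWords.
Variable d : nat.
Implicit Types (a b c e : 'I_d) (s u x : seq 'I_d).

Lemma step_seq_cons a s : reduced (a :: s) -> step_seq s a = a :: s.
Proof. by case: s => [|b s] //= /andP [ab _]; rewrite eq_sym (negbTE ab). Qed.

Lemma step_seqK a s : reduced s -> step_seq (step_seq s a) a = s.
Proof.
case: s => [|b s] /=; first by rewrite eqxx.
case: (eqVneq b a) => [-> | ba] /=; last by rewrite eqxx.
by case: s => [|b' s] //= /andP [ab' _]; rewrite eq_sym (negbTE ab').
Qed.

Lemma step_seq_cases a s : step_seq s a = a :: s \/ s = a :: step_seq s a.
Proof. by case: s => [|b s] /=; [left | case: eqP => [->|]; [right | left]]. Qed.

Lemma last_step_seq c a s :
  s != [::] -> step_seq s a != [::] -> last c (step_seq s a) = last c s.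
Proof. by case: s => [|b [|b' s]] //= _; case: ifP. Qed.

Lemma last_map_nonnil c (f : 'I_d -> 'I_d) s :
  s != [::] -> last c (map f s) = f (last c s).
Proof. by case: s => [|x s] //= _; rewrite last_map. Qed.

Lemma map_step_seq (p : {perm 'I_d}) s a :
  map p (step_seq s a) = step_seq (map p s) (p a).
Proof. by case: s => [|b s] //=; rewrite (inj_eq perm_inj); case: ifP. Qed.

Lemma reduced_map (p : {perm 'I_d}) s : reduced s -> reduced (map p s).
Proof. by apply: homo_sorted => a b; rewrite /neqr (inj_eq perm_inj). Qed.

Lemma reduced_rev s : reduced s -> reduced (rev s).
Proof. by rewrite rev_sorted; apply: sub_sorted => a b; rewrite /neqr eq_sym. Qed.

Definition wmul s u := foldr (fun a w => step_seq w a) u s.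

Lemma wmul_reduced s u : reduced u -> reduced (wmul s u).
Proof. by move=> ru; elim: s => [|a s IH] //=; apply: step_seq_sorted. Qed.

Lemma wmul_rev s : wmul s (rev s) = [::].
Proof.
elim/last_ind: s => [|s a IH] //.
by rewrite /wmul foldr_rcons rev_rcons /= eqxx.
Qed.

Lemma wmul_rcons_reduced s b u : reduced (rcons s b) -> wmul s (b :: u) = s ++ b :: u.
Proof.
elim: s => [|a s IH] //= rs; rewrite -/(wmul s _) IH; last exact: path_sorted rs.
by case: s rs {IH} => [|a' s] /= /andP [aa' _]; rewrite eq_sym (negbTE aa').
Qed.

(* [wmul x (rev u)] is [x u^-1], i.e. [x] seen from [u]: unless [x] lies below
   [u], the geodesic from [u] to [x] starts with the edge of colour [head u]. *)
Lemma last_wmul_rev c x u :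
  reduced x -> head c u = c -> ~~ suffix u x -> last c (wmul x (rev u)) = c.
Proof.
elim/last_ind: x u => [|x y IH] u rx hu nsuff; first by rewrite last_rev.
case/lastP: u hu nsuff => [|u z] hu; first by rewrite suffix0s.
rewrite suffix_rcons /wmul foldr_rcons rev_rcons -/(wmul _ _) /=.
case: eqP => [_ | zy] /= nsuff.
  have rx' : reduced x by move: rx; rewrite -cats1 => /cat_sorted2 [].
  apply: IH => //; case: u hu nsuff => [|a u] //=; by rewrite suffix0s.
rewrite wmul_rcons_reduced // last_cat /= last_rev.
by case: u hu.
Qed.

Fixpoint alt c e n : seq 'I_d := if n is n'.+1 then c :: e :: alt c e n' else [::].

Lemma size_alt c e n : size (alt c e n) = n.*2.
Proof. by elim: n => [|n IH] //=; rewrite IH doubleS. Qed.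

Lemma reduced_alt_cat c e a s n :
  c != e -> e != a -> reduced (a :: s) -> reduced (alt c e n ++ a :: s).
Proof.
move=> ce ea rs; elim: n => [|n IH] //=; rewrite {1}/neqr ce /=.
case: n IH => [|n] IH /=; first by rewrite {1}/neqr ea.
by move: IH => /= ->; rewrite andbT {1}/neqr eq_sym.
Qed.

End ReducedWords.

Section Vertices.
Variable d : nat.
Implicit Types (u v : vertex d) (g : vertex d -> vertex d).

Definition vroot : vertex d := exist _ [::] isT.

Lemma eq_vroot v : (v == vroot) = (val v == [::]).
Proof. by rewrite -val_eqE. Qed.

Lemma vertex_step v a s : val v = a :: s -> exists2 v', val v' = s & v = step v' a.
Proof.
move=> Ev; have rs : reduced s by move: (valP v); rewrite Ev => /path_sorted.
exists (exist _ s rs) => //; apply: val_inj; rewrite /= step_seq_cons // -Ev.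
exact: valP.
Qed.

Definition commutes_with_step g := forall v a, g (step v a) = step (g v) a.

Lemma commutes_with_step_id g : commutes_with_step g -> g vroot = vroot -> g =1 id.
Proof.
move=> g_step g_root v; move Ev: (val v) => s.
elim: s v Ev => [|a s IH] v Ev; first by rewrite (_ : v = vroot) //; apply: val_inj.
by have [v' /IH g_v' ->] := vertex_step Ev; rewrite g_step g_v'.
Qed.

(* Vertices are the elements of the free product of [d] copies of Z/2 and
   [step v a] is [a v], so the right translations [v |-> v u] preserve the
   colouring. *)
Definition rtrans u v : vertex d := exist _ (wmul (val v) (val u)) (wmul_reduced _ (valP u)).

Definition vinv u : vertex d := exist _ (rev (val u)) (reduced_rev (valP u)).

Lemma vinvK : involutive vinv.
Proof. by move=> u; apply: val_inj; rewrite /= revK. Qed.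

Lemma rtrans_step u v a : rtrans u (step v a) = step (rtrans u v) a.
Proof.
case: v => s rs; apply: val_inj => /=.
case: s rs => [|b s] rs //=; case: (eqVneq b a) => [-> | //].
by rewrite step_seqK //; apply: wmul_reduced (valP u).
Qed.

Lemma rtrans_root u : rtrans u vroot = u.
Proof. exact: val_inj. Qed.

Lemma rtransK u : cancel (rtrans u) (rtrans (vinv u)).
Proof.
apply: commutes_with_step_id => [v a | ]; first by rewrite !rtrans_step.
by rewrite rtrans_root; apply: val_inj; rewrite /= wmul_rev.
Qed.

Lemma rtrans_vinv u : rtrans (vinv u) u = vroot.
Proof. by rewrite -{2}(rtrans_root u) rtransK. Qed.

Lemma rtransKV u : cancel (rtrans (vinv u)) (rtrans u).
Proof. by rewrite -{2}(vinvK u); apply: rtransK. Qed.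

Lemma is_aut_of_local (H : {set {perm 'I_d}}) g :
  bijective g -> (forall v, local_in H g v) -> is_aut g.
Proof.
move=> g_bij g_loc; split=> // u w; have [p _ g_step] := g_loc u; split.
  by case=> a ->; exists (p a).
case=> b Egw; exists (p^-1 b)%g; apply: (bij_inj g_bij).
by rewrite g_step permKV.
Qed.

Definition rconj u g v := rtrans u (g (rtrans (vinv u) v)).

Lemma rconj_can u g g' : cancel g g' -> cancel (rconj u g) (rconj u g').
Proof. by move=> gK v; rewrite /rconj rtransK gK rtransKV. Qed.

Lemma rconj_rtrans u g v : rconj u g (rtrans u v) = rtrans u (g v).
Proof. by rewrite /rconj rtransK. Qed.

Lemma local_in_rconj (H : {set {perm 'I_d}}) u g v :
  local_in H g (rtrans (vinv u) v) -> local_in H (rconj u g) v.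
Proof.
move=> [p Hp g_step]; exists p => // a.
by rewrite /rconj rtrans_step g_step rtrans_step.
Qed.

Section Conjugation.
Variables (F F' : {set {perm 'I_d}}).

Lemma in_G_rconj u g : in_G F F' g -> in_G F F' (rconj u g).
Proof.
move=> [[[g' gK g'K] _] g_loc' [l g_loc]]; split.
- apply: (@is_aut_of_local F'); last by move=> v; apply: local_in_rconj.
  by exists (rconj u g'); apply: rconj_can.
- by move=> v; apply: local_in_rconj.
- exists (map (rtrans u) l) => v v_l; apply/local_in_rconj/g_loc.
  by apply: contra v_l => /(map_f (rtrans u)); rewrite rtransKV.
Qed.

Lemma in_K_rconj u g v : in_K F F' v g -> in_K F F' (rtrans u v) (rconj u g).
Proof. by case=> g_G g_v; split; [apply: in_G_rconj | rewrite rconj_rtrans g_v]. Qed.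

End Conjugation.

End Vertices.

(* The twist by [t]: a vertex whose geodesic from the root starts with the
   edge of colour [x] is relabelled letterwise by [fa x].  Its local
   permutation is [t] at the root and [fa x] elsewhere; [twist_at u] is its
   conjugate supported on the subtree below [u]. *)
Section Twist.
Variables (d : nat) (c : 'I_d) (t : {perm 'I_d}) (fa : 'I_d -> {perm 'I_d}).
Hypotheses (fa_diag : forall x, fa x x = t x) (fa_c : fa c = 1%g).

Definition twist (v : vertex d) : vertex d :=
  exist _ (map (fa (last c (val v))) (val v)) (reduced_map _ (valP v)).

Definition twist_inv (v : vertex d) : vertex d :=
  exist _ (map ((fa (t^-1 (last c (val v))))^-1)%g (val v)) (reduced_map _ (valP v)).

Lemma twistK : cancel twist twist_inv.
Proof.
move=> [s rs]; apply: val_inj => /=; case: (eqVneq s [::]) => [-> | s0] //.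
rewrite last_map_nonnil // fa_diag permK -map_comp map_id_in // => x _ /=.
by rewrite permK.
Qed.

Lemma twistKV : cancel twist_inv twist.
Proof.
move=> [s rs]; apply: val_inj => /=; case: (eqVneq s [::]) => [-> | s0] //.
set y := (t^-1)%g (last c s); have fa_y : ((fa y)^-1)%g (last c s) = y.
  by apply: (@perm_inj _ (fa y)); rewrite permKV fa_diag permKV.
rewrite last_map_nonnil // fa_y -map_comp map_id_in // => x _ /=.
by rewrite permKV.
Qed.

Lemma twist_id v : last c (val v) = c -> twist v = v.
Proof.
move=> v_c; apply: val_inj; rewrite /= v_c fa_c.
by rewrite map_id_in // => x _; rewrite perm1.
Qed.

Lemma twist_in_G (F F' : {set {perm 'I_d}}) :
  (forall x, fa x \in F) -> t \in F' -> F \subset F' -> in_G F F' twist.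
Proof.
move=> faF tF' sFF'.
have loc_F v : v != vroot d -> local_in F twist v.
  rewrite eq_vroot => v0; exists (fa (last c (val v))) => [|a]; first exact: faF.
  apply: val_inj; rewrite /= -map_step_seq.
  have [-> // | sa0] := eqVneq (step_seq (val v) a) [::].
  by rewrite last_step_seq.
have loc_root : local_in F' twist (vroot d).
  by exists t => // a; apply: val_inj; rewrite /= fa_diag.
have loc_F' v : local_in F' twist v.
  have [-> // | v0] := eqVneq v (vroot d).
  by have [p pF p_step] := loc_F v v0; exists p => //; apply: (subsetP sFF').
split=> //.
- apply: (@is_aut_of_local _ F') => //.
  by exists twist_inv; [apply: twistK | apply: twistKV].
- by exists [:: vroot d] => v; rewrite inE; apply: loc_F.
Qed.

Definition twist_at (u : vertex d) := rconj u twist.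

Lemma twist_at_in_K (F F' : {set {perm 'I_d}}) u :
  (forall x, fa x \in F) -> t \in F' -> F \subset F' -> head c (val u) = c ->
  in_K F F' (vroot d) (twist_at u).
Proof.
move=> faF tF' sFF' u_c.
rewrite -[vroot d](rtransKV u) rtrans_root; apply: in_K_rconj; split.
  exact: twist_in_G.
by apply: twist_id; rewrite /= last_rev.
Qed.

Lemma twist_at_outside u v :
  head c (val u) = c -> ~~ suffix (val u) (val v) -> twist_at u v = v.
Proof.
move=> u_c uv; rewrite /twist_at /rconj twist_id ?rtransKV //.
exact: last_wmul_rev (valP v) u_c uv.
Qed.

Lemma twist_at_moves u m v : t m != m -> val v = m :: val u -> twist_at u v <> v.
Proof.
move=> tm Ev /(congr1 (rtrans (vinv u))); rewrite /twist_at /rconj rtransK.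
move=> /(congr1 val) /=; rewrite Ev /= wmul_rev /= fa_diag => -[] /eqP.
by rewrite (negbTE tm).
Qed.

End Twist.

Section MinimalMovedVertex.
Variables (d : nat) (k : vertex d -> vertex d).

Lemma exists_minimal_moved :
  (exists v, k v <> v) ->
  exists w, k w <> w /\ forall v, size (val v) < size (val w) -> k v = v.
Proof.
move=> [v kv]; pose P n := exists w, size (val w) = n /\ k w <> w.
have [n [[[w [Ew kw]] n_min] _]] :=
  @dec_inh_nat_subset_has_unique_least_element P (fun n => classic (P n))
    (ex_intro _ _ (ex_intro _ v (conj erefl kv))).
exists w; split=> // v' lt_v'; apply: NNPP => kv'.
by have /leP := n_min _ (ex_intro _ v' (conj erefl kv')); lia.
Qed.

Hypotheses (k_inj : injective k) (k_adj : forall u w, adj u w -> adj (k u) (k w)).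

Lemma minimal_moved_sibling w :
  k (vroot d) = vroot d -> k w <> w ->
  (forall v, size (val v) < size (val w) -> k v = v) ->
  exists a b p, [/\ val w = a :: p, val (k w) = b :: p, b != a &
                    forall v, val v = p -> k v = v].
Proof.
move=> k_root kw w_min; case Ew: (val w) => [|a p].
  by case: kw; rewrite (_ : w = vroot d) //; apply: val_inj.
have p_fixed v : val v = p -> k v = v by move=> Ev; apply: w_min; rewrite Ev Ew.
have [pv Epv w_step] := vertex_step Ew.
have [b Ekw] : adj (k pv) (k w) by apply: k_adj; exists a.
rewrite (p_fixed pv Epv) in Ekw.
have [Ekw' | Ep] := step_seq_cases b p; last first.
  case: kw; apply: k_inj; apply: w_min.
  by rewrite Ekw /= Epv Ew /= (congr1 size Ep) /=; lia.
exists a, b, p; split=> //; first by rewrite Ekw /= Epv.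
by apply: contra_notN kw => /eqP ba; apply: val_inj; rewrite Ekw /= Epv Ekw' Ew ba.
Qed.

Lemma moved_subtree w a b p :
  val w = a :: p -> val (k w) = b :: p -> (forall v, val v = p -> k v = v) ->
  forall v, suffix (val w) (val v) -> suffix (b :: p) (val (k v)).
Proof.
move=> Ew Ekw p_fixed v /suffixP [z]; elim: z v => [|x z IH] v Ev.
  by rewrite (_ : v = w) ?Ekw ?suffix_refl //; apply: val_inj.
have [v' /IH /suffixP [z' Ekv'] v_step] := vertex_step Ev.
have [y Ekv] : adj (k v') (k v) by apply: k_adj; exists x.
rewrite Ekv /= Ekv'; case: (step_seq_cases y (z' ++ b :: p)) => [-> | ].
  by rewrite -cat_cons suffix_suffix.
case: z' Ekv' => [Ekv' [eb _] | y' z' _ [-> _]]; last by rewrite /= eqxx suffix_suffix.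
have /k_inj kv : k (k v) = k v by apply: p_fixed; rewrite Ekv /= Ekv' /= eb eqxx.
have := congr1 size Ev; rewrite -kv Ekv /= Ekv' /= eb eqxx Ew size_cat /=; lia.
Qed.

End MinimalMovedVertex.

Section ConjugacyClasses.
Variable d : nat.
Implicit Types (P Q : (vertex d -> vertex d) -> Prop) (k : vertex d -> vertex d).

Lemma ICC_transport P Q (phi psi : vertex d -> vertex d) :
  cancel phi psi -> cancel psi phi ->
  (forall g, P g -> Q (fun v => phi (g (psi v)))) ->
  (forall g, Q g -> P (fun v => psi (g (phi v)))) ->
  ICC P -> ICC Q.
Proof.
move=> phiK psiK PQ QP ICC_P k Qk [v kv] [l l_conj].
apply: (ICC_P _ (QP k Qk)); first by exists (psi v); rewrite /= psiK => /(can_inj psiK).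
exists (map (fun g v => psi (g (phi v))) l) => g [h [Ph gh]].
have conj_g : conj_of Q k (fun v => phi (g (psi v))).
  by exists (fun v => phi (h (psi v))); split=> [|v']; [apply: PQ | rewrite phiK gh psiK].
have [i [lt_i gi]] := l_conj _ conj_g.
by exists i; rewrite size_map; split=> // v'; rewrite (nth_map id) // -gi !phiK.
Qed.

(* For [n < N] the conjugate of [k] by [h N] sends [v n] to [k (v n)], whereas
   the conjugate by [h n] sends [h n (v n) <> v n] there. *)
Lemma conj_class_infinite P k (h hi : nat -> vertex d -> vertex d) (v : nat -> vertex d) :
  injective k -> (forall n, P (h n)) ->
  (forall n, cancel (h n) (hi n)) -> (forall n, cancel (hi n) (h n)) ->
  (forall n, h n (v n) <> v n) ->
  (forall n N, n < N -> h N (v n) = v n) ->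
  (forall n N, h N (k (v n)) = k (v n)) ->
  ~ finite_maps (conj_of P k).
Proof.
move=> k_inj Ph hK hKV h_moves h_fixes hk_fixes [l l_conj].
pose g n x := h n (k (hi n x)).
have conj_g n : conj_of P k (g n) by exists (h n); split=> // x; rewrite /g hK.
have [n [N [i [lt_nN gn gN]]]] := pigeonhole_rel (fun n => l_conj _ (conj_g n)).
have g_inj : injective (g N).
  by apply: inj_comp (can_inj (hK N)) _; apply: inj_comp k_inj (can_inj (hKV N)).
have g_eq x : g n x = g N x by rewrite gn gN.
apply: (h_moves n); apply: g_inj; transitivity (k (v n)).
  by rewrite -g_eq /g hK hk_fixes.
by symmetry; rewrite -{1}(h_fixes n N lt_nN) /g hK hk_fixes.
Qed.

End ConjugacyClasses.

Section LocalActions.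
Variables (d : nat) (F F' : {group {perm 'I_d}}).
Hypothesis F'_orbits : forall (f : {perm 'I_d}) x, f \in F' -> f x \in orbit 'P F x.

Lemma proper_stabilizer_nontrivial c :
  F \proper F' -> exists t m, [/\ t \in F', t c = c & t m != m].
Proof.
case/properP=> sFF' [f fF' fF]; have /orbitP [g gF gc] := F'_orbits c fF'.
exists (f * g^-1)%g; have [m fm] : exists m, f m != g m.
  apply/existsP; apply: contraNT fF => /existsPn fg.
  by rewrite (_ : f = g) //; apply/permP => x; apply/eqP/negPn.
have gF' := subsetP sFF' g gF.
have tF' : (f * g^-1)%g \in F' by rewrite groupM ?groupV ?fF'.
exists m; rewrite !permM -gc permK; split=> //.
by apply: contra fm => /eqP e; rewrite -{2}e permKV.
Qed.

Lemma local_interpolation t c :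
  t \in F' -> t c = c ->
  exists fa : 'I_d -> {perm 'I_d}, [/\ forall x, fa x \in F, forall x, fa x x = t x & fa c = 1%g].
Proof.
move=> tF' tc.
exists (fun x => if x == c then 1%g else odflt 1%g [pick g in F | g x == t x]).
split=> [x | x | ]; last by rewrite eqxx.
- by case: eqP => _; [exact: group1 | case: pickP => [g /andP []|] //=; rewrite group1].
- case: eqVneq => [-> | _]; first by rewrite perm1 tc.
  case: pickP => [g /andP [_ /eqP] // | none].
  by have /orbitP [g gF gx] := F'_orbits x tF'; move: (none g); rewrite gF -gx eqxx.
Qed.

End LocalActions.

Lemma ICC_in_K_from_vroot (d : nat) (F F' : {set {perm 'I_d}}) (v0 : vertex d) :
  ICC (in_K F F' (vroot d)) -> ICC (in_K F F' v0).
Proof.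
apply: (ICC_transport (rtransK v0) (rtransKV v0)) => g Kg.
  by have := in_K_rconj v0 Kg; rewrite rtrans_root.
by have := in_K_rconj (vinv v0) Kg; rewrite /rconj vinvK rtrans_vinv.
Qed.

Section ICCAtRoot.
Variables (d : nat) (F F' : {set {perm 'I_d}}) (c m : 'I_d) (t : {perm 'I_d}).
Variable fa : 'I_d -> {perm 'I_d}.
Hypotheses (d_gt2 : 2 < d) (sFF' : F \subset F') (tF' : t \in F') (tc : t c = c).
Hypotheses (tm : t m != m) (faF : forall x, fa x \in F).
Hypotheses (fa_diag : forall x, fa x x = t x) (fa_c : fa c = 1%g).

Lemma ICC_in_K_vroot : ICC (in_K F F' (vroot d)).
Proof.
move=> k [[[k_bij k_adj] _ _] k_root] k_moved.
have k_inj := bij_inj k_bij.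
have k_adj' u w : adj u w -> adj (k u) (k w) by move/k_adj.
have [w [kw w_min]] := exists_minimal_moved k_moved.
have [a [b [p [Ew Ekw ba p_fixed]]]] := minimal_moved_sibling k_inj k_adj' k_root kw w_min.
have [e ec ea] : exists2 e, e != c & e != a by apply: exists_third; rewrite card_ord.
have mc : m != c by apply: contraNneq tm => ->; rewrite tc.
have reduced_u n : reduced (alt c e n.+1 ++ a :: p).
  by apply: reduced_alt_cat => //; [rewrite eq_sym | rewrite -Ew; apply: valP].
pose u n : vertex d := exist _ (alt c e n.+1 ++ a :: p) (reduced_u n).
have reduced_v n : reduced (m :: val (u n)) by rewrite /= {1}/neqr mc; apply: reduced_u.
pose v n : vertex d := exist _ (m :: val (u n)) (reduced_v n).
apply: (conj_class_infinite (h := fun n => twist_at c fa (u n))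
  (hi := fun n => rconj (u n) (twist_inv c t fa)) (v := v)) => // [n | n | n | n | n N lt_nN | n N].
- exact: (twist_at_in_K fa_diag fa_c faF tF' sFF').
- exact/rconj_can/(twistK _ fa_diag).
- exact/rconj_can/(twistKV _ fa_diag).
- exact: (twist_at_moves fa_diag tm).
- apply: twist_at_outside => //; apply/negP => /size_suffix.
  by rewrite /= !size_cat !size_alt /=; lia.
- apply: twist_at_outside => //.
  have w_vn : suffix (val w) (val (v n)).
    by apply/suffixP; exists (m :: alt c e n.+1); rewrite Ew.
  have /suffixP [z ->] := moved_subtree k_inj k_adj' Ew Ekw p_fixed w_vn.
  change (~~ suffix (alt c e N.+1 ++ a :: p) (z ++ b :: p)).
  by rewrite -!cat_rcons suffix_catl // eqxx suffix_rcons eq_sym (negbTE ba).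
Qed.

End ICCAtRoot.

Theorem proposition3 (d : nat) (F F' : {group {perm 'I_d}}) (v0 : vertex d) :
  (3 <= d)%N ->
  F \proper F' ->
  (forall (f : {perm 'I_d}) (x : 'I_d), f \in F' -> f x \in orbit 'P F x) ->
  ICC (in_K F F' v0).
Proof.
move=> d_gt2 FF' F'_orbits; apply: ICC_in_K_from_vroot.
have d_gt0 : 0 < d by apply: leq_trans d_gt2.
have [t [m [tF' tc tm]]] := proper_stabilizer_nontrivial F'_orbits (Ordinal d_gt0) FF'.
have [fa [faF fa_diag fa_c]] := local_interpolation F'_orbits tF' tc.
exact: (ICC_in_K_vroot d_gt2 (proper_sub FF') tF' tc tm faF fa_diag fa_c).
Qed.
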